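(* Let $\alpha=1^{a_1}2^{a_2}\cdots$ be a partition and $n\geq 0$ an integer. Then $$\Big\{\binom X\alpha\Big\}_n=\begin{cases}\dfrac{\mathrm{sgn}(\alpha)}{z_\alpha} & \text{if } n\in\{|\alpha|,|\alpha|+1\},\\[2mm] 0 & \text{otherwise,}\end{cases}$$ where $z_\alpha=\prod_i i^{a_i}a_i!$ and $\mathrm{sgn}(\alpha)=(-1)^{|\alpha|-l(\alpha)}$ is the value of the sign character on a permutation of cycle type $\alpha$.
   Context: For $i\geq 1$, $X_i$ is the class function on $S_n$ (for every $n$) with $X_i(\sigma)$ = number of cycles of length $i$ of $\sigma$. A partition $\alpha$ is written in exponential notation $1^{a_1}2^{a_2}\cdots$ where $a_i$ is the number of parts equal to $i$; $|\alpha|=\sum_i ia_i$ and $l(\alpha)=\sum_i a_i$. Define $\binom X\alpha=\prod_i\binom{X_i}{a_i}\in\mathbb C[X_1,X_2,\dotsc]$. For $p\in\mathbb C[X_1,X_2,\dotsc]$ the signed moment is $\{p\}_n=\frac1{n!}\sum_{\sigma\in S_n}\mathrm{sgn}(\sigma)\,p(X_1(\sigma),X_2(\sigma),\dotsc)$ (with $S_0$ the trivial group). *)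

From HB Require Import structures.
From mathcomp Require Import all_boot all_order all_algebra all_fingroup.
Set Implicit Arguments. Unset Strict Implicit. Unset Printing Implicit Defensive.
Import Order.TTheory GRing.Theory Num.Theory.
Local Open Scope ring_scope.

(* A partition alpha = 1^{a_1} 2^{a_2} ... is encoded by a finite sequence
   of multiplicities  a : seq nat  with  a_i = nth 0 a (i-1)  (i >= 1);
   multiplicities beyond size a are 0. *)
Definition mult (a : seq nat) (i : nat) : nat := nth 0%N a i.-1.

(* X_i(sigma) = number of cycles of length i of sigma (fixed points count as
   cycles of length 1). *)
Definition Xcyc (n : nat) (s : 'S_n) (i : nat) : nat :=
  #|[set C in porbits s | #|C| == i]|.

Definition sgnp (n : nat) (s : 'S_n) : rat := (-1) ^+ odd_perm s.

Definition binomX (a : seq nat) (n : nat) (s : 'S_n) : rat :=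
  (\prod_(1 <= i < (size a).+1) 'C(Xcyc s i, mult a i))%:R.

Definition smoment (p : forall n : nat, 'S_n -> rat) (n : nat) : rat :=
  (n`!)%:R^-1 * \sum_(s : 'S_n) sgnp s * p n s.

Definition psize (a : seq nat) : nat := (\sum_(1 <= i < (size a).+1) i * mult a i)%N.
Definition plength (a : seq nat) : nat := (\sum_(1 <= i < (size a).+1) mult a i)%N.
Definition zee (a : seq nat) : nat :=
  (\prod_(1 <= i < (size a).+1) (i ^ mult a i * (mult a i)`!))%N.
Definition psgn (a : seq nat) : rat := (-1) ^+ (psize a - plength a)%N.

(* Multiplying binom(X, alpha) by a_i amounts to choosing one i-cycle D of the
   permutation and keeping binom(X, alpha minus a part i) for the cycles off D.
   Writing the permutation as c * r with c the i-cycle on D and r supported on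
   the complement, the signed sum over permutations of a set B factors: the
   signed count of i-cycles on D is (-1)^(i-1) (i-1)!, so summing over the
   'C(|B|, i) choices of D gives a recursion in l(alpha).  Its base case is
   that the signs of the permutations of B cancel unless |B| <= 1, and the
   recursion solves to z_alpha * sum = sgn(alpha) |B|! for |B| in
   {|alpha|, |alpha| + 1} and 0 otherwise. *)

From HB Require Import structures.
From mathcomp Require Import all_boot all_order all_algebra all_fingroup.
From mathcomp Require Import ring zify.
Set Implicit Arguments. Unset Strict Implicit. Unset Printing Implicit Defensive.
Import Order.TTheory GRing.Theory Num.Theory.
Local Open Scope ring_scope.

Section PermOrbits.
Variable T : finType.
Implicit Types (s t c r : {perm T}) (A B D : {set T}) (x y z : T).

Lemma perm_onS A B s : A \subset B -> perm_on A s -> perm_on B s.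
Proof. by move=> AB sA; apply: subset_trans sA AB. Qed.

Lemma porbit_sub s A y :
  (forall z, z \in A -> s z \in A) -> y \in A -> porbit s y \subset A.
Proof.
move=> sA yA; apply/subsetP=> _ /porbitP [i ->]; elim: i => [|i IHi].
  by rewrite expg0 perm1.
by rewrite expgSr permM sA.
Qed.

Lemma porbitS s x y : y \in porbit s x -> s y \in porbit s x.
Proof. by case/porbitP=> i ->; apply/porbitP; exists i.+1; rewrite expgSr permM. Qed.

Lemma eq_in_porbit s t x : {in porbit s x, s =1 t} -> porbit t x = porbit s x.
Proof.
move=> est; have iterE i : (t ^+ i)%g x = (s ^+ i)%g x.
  elim: i => [|i IHi]; first by rewrite !expg0 !perm1.
  by rewrite !expgSr !permM IHi est ?mem_porbit.
by apply/setP=> y; apply/porbitP/porbitP=> -[i ->]; exists i; rewrite iterE.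
Qed.

Lemma porbit_fix s x : s x = x -> porbit s x = [set x].
Proof.
move=> sx; apply/eqP; rewrite eqEsubset sub1set porbit_id andbT.
by apply: porbit_sub; rewrite ?set11 // => z /set1P ->; rewrite sx set11.
Qed.

Lemma porbit_of_mem s D x : D \in porbits s -> x \in D -> porbit s x = D.
Proof. by case/imsetP=> y _ -> xD; apply/eqP; rewrite eq_porbit_mem. Qed.

Lemma porbits_stable s D x : D \in porbits s -> (s x \in D) = (x \in D).
Proof.
case/imsetP=> y _ ->; rewrite -!eq_porbit_mem.
by rewrite -[s x]/(aperm x (s ^+ 1)%g) /aperm porbit_perm.
Qed.

Lemma porbit_mul_tperm s x y : s x = x -> y != x ->
  porbit (s * tperm x y) x = x |: porbit s y.
Proof.
move=> sx yx; set t := (s * tperm x y)%g.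
have tx : t x = y by rewrite permM sx tpermL.
apply/eqP; rewrite eqEsubset; apply/andP; split.
  apply: porbit_sub; last by rewrite setU11.
  move=> z /setU1P [-> | zs]; first by rewrite tx setU1r ?porbit_id.
  rewrite permM; case: tpermP => [_|_|_ _]; first by rewrite setU1r ?porbit_id.
    by rewrite setU11.
  by rewrite setU1r ?porbitS.
have yt : y \in porbit t x by rewrite -tx porbitS ?porbit_id.
rewrite subUset sub1set porbit_id; apply: (porbit_sub _ yt) => z zt.
have -> : s z = tperm x y (t z) by rewrite permM tpermK.
by move: (porbitS zt); case: tpermP => // _ _; exact: porbit_id.
Qed.

(* For a singleton D the only such c is the identity. *)
Definition cycle_on D c := perm_on D c && (D \in porbits c).

Lemma cycle_on_mul_tperm D x y c : x \in D -> y \in D :\ x ->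
  cycle_on D (c * tperm x y) && ((c * tperm x y)%g x == y) = cycle_on (D :\ x) c.
Proof.
move=> xD /setD1P [yx yD].
have tD : perm_on D (tperm x y).
  by apply: perm_onS (tperm_on x y); rewrite subUset !sub1set xD.
apply/idP/idP.
  case/andP=> /andP [ctD orbD] /eqP ctx.
  have cx : c x = x.
    by move: ctx; rewrite permM => /(congr1 (tperm x y)); rewrite tpermK tpermR.
  have cD : perm_on D c by rewrite -(mulgK (tperm x y) c) tpermV perm_onM.
  apply/andP; split.
    apply/subsetP=> z; rewrite inE => cz; rewrite !inE (subsetP cD) // andbT.
    by apply: contraNneq cz => ->; rewrite cx.
  have xs : x \notin porbit c y by rewrite porbit_sym porbit_fix // inE.
  have := porbit_mul_tperm cx yx; rewrite (porbit_of_mem orbD xD) => ->.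
  by rewrite setU1K // imset_f.
case/andP=> cD orbD.
have cx : c x = x by apply: (out_perm cD); rewrite setD11.
have ctx : (c * tperm x y)%g x = y by rewrite permM cx tpermL.
rewrite /cycle_on ctx eqxx andbT perm_onM ?(perm_onS (subD1set D x) cD) //=.
have yDx : y \in D :\ x by rewrite !inE yx.
by rewrite -(setD1K xD) -(porbit_of_mem orbD yDx) -porbit_mul_tperm // imset_f.
Qed.

End PermOrbits.

Section PermSign.
Variables (R : numDomainType) (T : finType).
Implicit Types (s c : {perm T}) (B D : {set T}).

Definition perm_sign s : R := (-1) ^+ odd_perm s.

Lemma perm_sign1 : perm_sign 1%g = 1.
Proof. by rewrite /perm_sign odd_perm1. Qed.

Lemma perm_signM s t : perm_sign (s * t)%g = perm_sign s * perm_sign t.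
Proof. by rewrite /perm_sign odd_permM signr_addb. Qed.

Lemma perm_sign_tperm x y : x != y -> perm_sign (tperm x y) = -1.
Proof. by rewrite /perm_sign odd_tperm => ->. Qed.

Lemma sum_perm_sign B : \sum_(s | perm_on B s) perm_sign s = (#|B| <= 1)%:R.
Proof.
have [B_le1 | /card_gt1P [x [y [xB yB xy]]]] := leqP #|B| 1.
  rewrite (big_pred1 1%g) ?perm_sign1 // => s /=.
  by apply/idP/eqP => [/perm_on_id-> // | ->]; apply: perm_on1.
have tB : perm_on B (tperm x y).
  by apply: perm_onS (tperm_on x y); rewrite subUset !sub1set xB.
have tB_mul s : perm_on B (tperm x y * s)%g = perm_on B s.
  apply/idP/idP => [tsB | /(perm_onM tB)//].
  by rewrite -(tpermKg x y s) perm_onM.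
set S := \sum_(s | _) _; suff: S *+ 2 = 0 by move/eqP; rewrite mulrn_eq0 => /eqP.
suff SN : S = - S by rewrite mulr2n {2}SN subrr.
rewrite -sumrN /S (reindex_inj (mulgI (tperm x y))) /= (eq_bigl _ _ tB_mul).
by apply: eq_bigr => s _; rewrite perm_signM perm_sign_tperm // mulN1r.
Qed.

Lemma sum_cycle_sign D n : #|D| = n.+1 ->
  \sum_(c | cycle_on D c) perm_sign c = (-1) ^+ n * n`!%:R.
Proof.
elim: n D => [|n IHn] D Dn.
  have /cards1P [x ->] : #|D| == 1%N by rewrite Dn.
  rewrite (big_pred1 1%g) ?perm_sign1 ?mulr1 // => c.
  apply/andP/eqP => [[/perm_on_id-> //] | ->]; first by rewrite cards1.
  by rewrite perm_on1 -(porbit_fix (perm1 x)) imset_f.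
have [x xD] : {x | x \in D} by apply/sigW/set0Pn; rewrite -card_gt0 Dn.
have Dxn : #|D :\ x| = n.+1 by move: Dn; rewrite (cardsD1 x) xD => -[].
rewrite (partition_big (fun c => c x) [in D :\ x]) /=; last first.
  move=> c /andP [cD orbD]; rewrite !inE (perm_closed _ cD) xD andbT.
  apply/eqP=> cx; move: Dn.
  by rewrite -(porbit_of_mem orbD xD) porbit_fix // cards1.
have sum_cx y : y \in D :\ x ->
    \sum_(c | cycle_on D c && (c x == y)) perm_sign c = - ((-1) ^+ n * n`!%:R).
  move=> yDx; have xy : x != y by move: yDx; rewrite !inE eq_sym => /andP [].
  rewrite (reindex_inj (mulIg (tperm x y))) /=.
  rewrite (eq_bigl _ _ (fun c => cycle_on_mul_tperm c xD yDx)).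
  rewrite -(IHn _ Dxn) -sumrN; apply: eq_bigr => c _.
  by rewrite perm_signM perm_sign_tperm // mulrN1.
rewrite (eq_bigr _ sum_cx) sumr_const Dxn factS natrM exprS.
by rewrite -mulr_natr; ring.
Qed.

End PermSign.

Arguments perm_sign {R T} s.

Section CycleSplit.
Variable T : finType.
Implicit Types (s c r : {perm T}) (B D : {set T}) (y : T).

Lemma mul_perm_onE D c r y : perm_on D c -> perm_on (~: D) r ->
  (c * r)%g y = if y \in D then c y else r y.
Proof.
move=> cD rD; rewrite permM; case: ifP => yD.
  by rewrite (out_perm rD) // inE negbK (perm_closed _ cD).
by rewrite (out_perm cD) ?yD.
Qed.

Lemma porbit_mul_notin D c r y : perm_on D c -> perm_on (~: D) r ->
  y \notin D -> porbit (c * r) y = porbit r y.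
Proof.
move=> cD rD yD; apply: eq_in_porbit => z zr.
have : porbit r y \subset ~: D.
  by apply: porbit_sub; rewrite ?inE // => u uD; rewrite (perm_closed _ rD).
by move/subsetP/(_ z zr); rewrite inE (mul_perm_onE _ cD rD) => /negbTE->.
Qed.

Lemma porbit_mul_in D c r y : perm_on D c -> perm_on (~: D) r ->
  y \in D -> D \in porbits c -> porbit (c * r) y = D.
Proof.
move=> cD rD yD orbD; rewrite -(porbit_of_mem orbD yD); apply: eq_in_porbit => z.
by rewrite (porbit_of_mem orbD yD) (mul_perm_onE _ cD rD) => ->.
Qed.

Lemma cycle_mul_inj D c1 c2 r1 r2 : perm_on D c1 -> perm_on (~: D) r1 ->
  perm_on D c2 -> perm_on (~: D) r2 -> (c1 * r1 = c2 * r2)%g -> c1 = c2.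
Proof.
move=> c1D r1D c2D r2D /permP eq12; apply/permP=> y.
have [yD | yD] := boolP (y \in D); last by rewrite (out_perm c1D) ?(out_perm c2D).
by have := eq12 y; rewrite (mul_perm_onE _ c1D r1D) (mul_perm_onE _ c2D r2D) yD.
Qed.

Lemma porbits_restr_perm B D s : perm_on B s -> D \in porbits s ->
  cycle_on D (restr_perm D s) && perm_on (B :\: D) ((restr_perm D s)^-1 * s)%g.
Proof.
move=> sB orbD; set c := restr_perm D s.
have sND : s \in ('N(D | 'P))%g by apply/astabsP=> x; apply: porbits_stable.
have cE : {in D, c =1 s} by move=> x; apply: restr_permE.
have cD : perm_on D c := restr_perm_on D s.
apply/andP; split.
  apply/andP; split => //; have [x _ Dx] := imsetP orbD.
  rewrite Dx -(eq_in_porbit (s := s) (t := c)) ?imset_f // => z.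
  by rewrite -Dx => /cE.
apply/subsetP=> z; rewrite inE permM => s'z.
have [zD | zD] := boolP (z \in D).
  by move: s'z; rewrite -cE ?permKV ?eqxx // (perm_closed _ (perm_onV cD)).
move: s'z; rewrite (out_perm (perm_onV cD)) // => szz.
by rewrite inE zD (subsetP sB) // inE.
Qed.

Lemma sum_perm_on_porbit (V : nmodType) B D (F : {perm T} -> V) : D \subset B ->
  \sum_(s | perm_on B s && (D \in porbits s)) F s =
  \sum_(c | cycle_on D c) \sum_(r | perm_on (B :\: D) r) F (c * r)%g.
Proof.
move=> DB; have DcB : B :\: D \subset ~: D := subsetDr B D.
set A := [set p | cycle_on D p.1 && perm_on (B :\: D) p.2].
rewrite pair_big_dep (eq_bigl [in A]) => [|p]; last by rewrite inE.
rewrite -(big_imset (h := fun p => (p.1 * p.2)%g)) /=.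
  apply: eq_bigl => s; apply/andP/imsetP => [[sB orbD] | [[c r]]].
    have /andP [cD rBD] := porbits_restr_perm sB orbD.
    by exists (restr_perm D s, ((restr_perm D s)^-1 * s)%g); rewrite ?inE ?cD //= mulKVg.
  rewrite inE /= => /andP [/andP [cD orbD] rBD] ->.
  have rD := perm_onS DcB rBD.
  have [x _ Dx] := imsetP orbD; have xD : x \in D by rewrite Dx porbit_id.
  split; first by rewrite perm_onM ?(perm_onS DB cD) ?(perm_onS (subsetDl B D) rBD).
  by rewrite -(porbit_mul_in cD rD xD orbD) imset_f.
move=> [c1 r1] [c2 r2]; rewrite !inE /= => /andP [/andP [c1D _] r1D].
move=> /andP [/andP [c2D _] r2D] eq12.
have r1D' := perm_onS DcB r1D; have r2D' := perm_onS DcB r2D.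
have ec := cycle_mul_inj c1D r1D' c2D r2D' eq12.
by move: eq12; rewrite ec => /mulgI ->.
Qed.

End CycleSplit.

Section CycleCount.
Variable T : finType.
Implicit Types (s c r : {perm T}) (B D E : {set T}).

(* Only orbits inside B are counted: a permutation supported on B also has
   fixed points outside B. *)
Definition cycles_in B s i := [set E in porbits s | (E \subset B) && (#|E| == i)].

Definition ncycles B s i := #|cycles_in B s i|.

Lemma ncycles_mul B D c r i : perm_on D c -> perm_on (~: D) r -> B \subset ~: D ->
  ncycles B (c * r)%g i = ncycles B r i.
Proof.
move=> cD rD BD; apply: eq_card => E; rewrite !inE.
have [EB | _] := boolP (E \subset B); last by rewrite !andbF.
congr (_ && _); apply/imsetP/imsetP => -[y _ Ey]; exists y => //.
all: have : y \in ~: D by rewrite (subsetP BD) // (subsetP EB) // Ey porbit_id.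
all: by rewrite inE Ey => /(porbit_mul_notin cD rD) ->.
Qed.

Lemma ncycles_setD B s D i j : D \in cycles_in B s i ->
  ncycles (B :\: D) s j = (ncycles B s j - (j == i))%N.
Proof.
rewrite inE => /and3P [orbD DB /eqP Di]; rewrite /ncycles.
have -> : cycles_in (B :\: D) s j = cycles_in B s j :\ D.
  apply/setP => E; rewrite !inE.
  case: (boolP (E \in porbits s)) => orbE /=; last by rewrite andbF.
  rewrite subsetD andbAC [RHS]andbC; congr (_ && _).
  apply/idP/idP => [| ED].
    apply: contraTneq => ->; rewrite -setI_eq0 setIid; apply/set0Pn.
    by have [x _ ->] := imsetP orbD; exists x; apply: porbit_id.
  rewrite -setI_eq0; apply: contraR ED => /set0Pn [x /setIP [xE xD]].
  by rewrite -(porbit_of_mem orbE xE) (porbit_of_mem orbD xD).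
rewrite (cardsD1 D (cycles_in B s j)) !inE orbD DB Di /= eq_sym.
by case: (j == i); rewrite ?add1n ?subn1 ?subn0.
Qed.

End CycleCount.

Section RemovePart.
Implicit Types (a : seq nat) (i j : nat).

Definition mult_dec a i := set_nth 0%N a i.-1 (mult a i).-1.

Lemma size_mult_dec a i : (0 < i <= size a)%N -> size (mult_dec a i) = size a.
Proof.
by move=> /andP [i_gt0 ia]; rewrite size_set_nth; apply/maxn_idPr; rewrite prednK.
Qed.

Lemma mult_decE a i j : (0 < i)%N -> (0 < j)%N ->
  mult (mult_dec a i) j = if j == i then (mult a i).-1 else mult a j.
Proof.
move=> i_gt0 j_gt0; rewrite /mult nth_set_nth /=.
by rewrite -(inj_eq (succn_inj)) !prednK //; case: eqP => // ->.
Qed.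

Section BigMult.
Variables (V : Type) (idx : V) (op : Monoid.com_law idx) (F : nat -> nat -> V).

Lemma bigD1_mult a i : (0 < i <= size a)%N ->
  \big[op/idx]_(1 <= j < (size a).+1) F j (mult a j) =
  op (F i (mult a i)) (\big[op/idx]_(1 <= j < (size a).+1 | j != i) F j (mult a j)).
Proof. by move=> ia; rewrite (bigD1_seq i) ?mem_index_iota ?ltnS ?iota_uniq. Qed.

Lemma big_mult_dec a i : (0 < i <= size a)%N ->
  \big[op/idx]_(1 <= j < (size (mult_dec a i)).+1) F j (mult (mult_dec a i) j) =
  op (F i (mult a i).-1) (\big[op/idx]_(1 <= j < (size a).+1 | j != i) F j (mult a j)).
Proof.
move=> /[dup] ia /andP [i_gt0 _].
rewrite size_mult_dec // (bigD1_seq i) ?mem_index_iota ?ltnS ?iota_uniq //.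
rewrite mult_decE ?eqxx //; congr (op _ _).
rewrite [LHS]big_seq_cond [RHS]big_seq_cond; apply: eq_bigr => j.
by rewrite mem_index_iota => /andP [/andP [j_gt0 _] /negbTE ji]; rewrite mult_decE // ji.
Qed.

End BigMult.

Section Dec.
Variables (a : seq nat) (i : nat).
Hypotheses (ia : (0 < i <= size a)%N) (a_i_gt0 : (0 < mult a i)%N).

Lemma psize_dec : psize a = (psize (mult_dec a i) + i)%N.
Proof.
rewrite /psize (big_mult_dec _ (fun j k => j * k)%N ia).
by rewrite (bigD1_mult _ (fun j k => j * k)%N ia) /= -(prednK a_i_gt0); ring.
Qed.

Lemma plength_dec : plength a = (plength (mult_dec a i)).+1.
Proof.
rewrite /plength (big_mult_dec _ (fun _ k => k) ia).
by rewrite (bigD1_mult _ (fun _ k => k) ia) /= -(prednK a_i_gt0).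
Qed.

Lemma zee_dec : zee a = (zee (mult_dec a i) * (i * mult a i))%N.
Proof.
rewrite /zee (big_mult_dec _ (fun j k => j ^ k * k`!)%N ia).
rewrite (bigD1_mult _ (fun j k => j ^ k * k`!)%N ia) /= -(prednK a_i_gt0) expnS factS.
by ring.
Qed.

End Dec.

Lemma plength_le_psize a : (plength a <= psize a)%N.
Proof.
rewrite /plength /psize !big_seq; apply: leq_sum => j.
by rewrite mem_index_iota => /andP [j_gt0 _]; rewrite leq_pmull.
Qed.

Lemma zee_gt0 a : (0 < zee a)%N.
Proof.
rewrite /zee big_seq prodn_cond_gt0 // => j.
by rewrite mem_index_iota => /andP [j_gt0 _]; rewrite muln_gt0 expn_gt0 j_gt0 fact_gt0.
Qed.

Lemma plength_eq0 a : plength a = 0%N ->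
  forall j, (0 < j <= size a)%N -> mult a j = 0%N.
Proof.
move/eqP; rewrite /plength sum_nat_seq_eq0 => /allP a0 j ja.
by apply/eqP/a0; rewrite mem_index_iota ltnS.
Qed.

Lemma plength_gt0 a : (0 < plength a)%N ->
  exists2 i, (0 < i <= size a)%N & (0 < mult a i)%N.
Proof.
rewrite lt0n /plength sum_nat_seq_neq0 => /hasP [i].
by rewrite mem_index_iota ltnS -lt0n; exists i.
Qed.

End RemovePart.

Section SignedBinomSum.
Variables (R : numDomainType) (T : finType).
Implicit Types (a : seq nat) (s c r : {perm T}) (B D : {set T}).

Definition binom_ncycles a B s : nat :=
  \prod_(1 <= j < (size a).+1) 'C(ncycles B s j, mult a j).

Definition signed_binom_sum a B : R :=
  \sum_(s | perm_on B s) perm_sign s * (binom_ncycles a B s)%:R.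

Definition window_fact (k e N : nat) : R :=
  if (N == k) || (N == k.+1) then (-1) ^+ e * N`!%:R else 0.

Lemma binom_ncycles_dec a B s i : (0 < i <= size a)%N -> (0 < mult a i)%N ->
  (mult a i * binom_ncycles a B s =
   \sum_(D in cycles_in B s i) binom_ncycles (mult_dec a i) (B :\: D) s)%N.
Proof.
move=> ia ai.
pose rest := (\prod_(1 <= j < (size a).+1 | j != i) 'C(ncycles B s j, mult a j))%N.
have termE D : D \in cycles_in B s i -> binom_ncycles (mult_dec a i) (B :\: D) s =
    ('C((ncycles B s i).-1, (mult a i).-1) * rest)%N.
  move=> Ds; rewrite /binom_ncycles (big_mult_dec _ (fun j k => 'C(ncycles _ s j, k)) ia).
  rewrite (ncycles_setD _ Ds) eqxx subn1; congr (_ * _)%N.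
  by apply: eq_bigr => j ji; rewrite (ncycles_setD _ Ds) (negbTE ji) subn0.
rewrite (eq_bigr _ termE) sum_nat_const -/(ncycles B s i) /binom_ncycles.
rewrite (bigD1_mult _ (fun j k => 'C(ncycles B s j, k)) ia) /= !mulnA -/rest.
by rewrite -{1 2}(prednK ai) -mul_bin_diag.
Qed.

Lemma signed_binom_sum_dec a B i : (0 < i <= size a)%N -> (0 < mult a i)%N ->
  (mult a i)%:R * signed_binom_sum a B =
  \sum_(D : {set T} | (D \subset B) && (#|D| == i))
    (\sum_(c | cycle_on D c) perm_sign c) * signed_binom_sum (mult_dec a i) (B :\: D).
Proof.
move=> ia ai; rewrite /signed_binom_sum mulr_sumr.
transitivity (\sum_(s | perm_on B s) \sum_(D : {set T} | (D \subset B) && (#|D| == i))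
    if D \in porbits s then perm_sign s * (binom_ncycles (mult_dec a i) (B :\: D) s)%:R : R
    else 0).
  apply: eq_bigr => s _; rewrite mulrCA -natrM binom_ncycles_dec // natr_sum mulr_sumr.
  by rewrite -big_mkcondr; apply: eq_bigl => D; rewrite !inE andbC.
rewrite exchange_big; apply: eq_bigr => D /andP [DB _].
rewrite -big_mkcondr sum_perm_on_porbit // mulr_suml; apply: eq_bigr => c /andP [cD _].
rewrite mulr_sumr; apply: eq_bigr => r rBD.
rewrite perm_signM -mulrA; congr (_ * (_ * _%:R)).
apply: eq_bigr => j _; rewrite (ncycles_mul _ cD) ?subsetDr //.
exact: perm_onS (subsetDr B D) rBD.
Qed.

Lemma signed_binom_sum_nil a B : plength a = 0%N ->
  signed_binom_sum a B = (#|B| <= 1)%:R.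
Proof.
move=> /plength_eq0 a0; rewrite -sum_perm_sign; apply: eq_bigr => s _.
rewrite /binom_ncycles big_nat big1 ?mulr1 // => j ja.
by rewrite a0 ?bin0.
Qed.

Lemma window_fact_step k e i N :
  ('C(N, i.+1) * i.+1`!)%:R * (-1) ^+ i * window_fact k e (N - i.+1) =
  window_fact (k + i.+1) (e + i) N.
Proof.
rewrite /window_fact; have [iN | Ni] := leqP i.+1 N; last first.
  rewrite bin_small // mul0n !mul0r [RHS]ifF //; apply/negbTE/norP; split; apply/eqP; lia.
have -> : ((N - i.+1 == k) || (N - i.+1 == k.+1) =
            (N == k + i.+1) || (N == (k + i.+1).+1))%N.
  by congr orb; apply/eqP/eqP; lia.
case: ifP => _; last by rewrite mulr0.
rewrite -(bin_fact iN) !natrM exprD; ring.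
Qed.

End SignedBinomSum.

Lemma zee_signed_binom_sum (R : numDomainType) (T : finType) a (B : {set T}) :
  (zee a)%:R * signed_binom_sum R a B = window_fact R (psize a) (psize a - plength a) #|B|.
Proof.
have [L aL] : {L | plength a = L} by exists (plength a).
elim: L a aL B => [|L IHL] a aL B.
  have a0 j : (1 <= j < (size a).+1)%N -> mult a j = 0%N by rewrite ltnS => /(plength_eq0 aL).
  have -> : psize a = 0%N by rewrite /psize big_nat big1 // => j /a0 ->; rewrite muln0.
  have -> : zee a = 1%N by rewrite /zee big_nat big1 // => j /a0 ->.
  rewrite mul1r signed_binom_sum_nil // aL /window_fact.
  by case: #|B| => [|[|N]]; rewrite ?expr0 ?mul1r.
have [[//|i] ia ai] : exists2 i, (0 < i <= size a)%N & (0 < mult a i)%N.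
  by apply: plength_gt0; rewrite aL.
set a' := mult_dec a i.+1; set N := #|B|.
have a'L : plength a' = L by move: aL; rewrite (plength_dec ia ai) => -[].
have termE (D : {set T}) : (D \subset B) && (#|D| == i.+1) ->
    i.+1%:R * ((zee a')%:R *
      ((\sum_(c | cycle_on D c) perm_sign c) * signed_binom_sum R a' (B :\: D))) =
    (i.+1`!)%:R * (-1) ^+ i * window_fact R (psize a') (psize a' - L) (N - i.+1).
  move=> /andP [DB /eqP Di]; rewrite (sum_cycle_sign _ Di) [(zee a')%:R * _]mulrCA.
  rewrite (IHL _ a'L) a'L.
  by rewrite cardsD (setIidPr DB) Di factS natrM; ring.
have -> : (zee a)%:R * signed_binom_sum R a B =
    i.+1%:R * ((zee a')%:R * ((mult a i.+1)%:R * signed_binom_sum R a B)).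
  by rewrite (zee_dec ia ai) !natrM; ring.
rewrite (signed_binom_sum_dec _ _ ia ai) !mulr_sumr (eq_bigr _ termE) sumr_const.
have -> : #|[pred D : {set T} | (D \subset B) && (#|D| == i.+1)]| = 'C(N, i.+1).
  by rewrite -cards_draws; apply: eq_card => D; rewrite inE.
rewrite -[_ *+ 'C(N, i.+1)]mulr_natl !mulrA -natrM window_fact_step.
rewrite (psize_dec ia ai) -/a'; congr (window_fact _ _ _ _).
by have := plength_le_psize a'; rewrite (plength_dec ia ai) a'L; lia.
Qed.

Theorem theorem2p5 (a : seq nat) (n : nat) :
  smoment (binomX a) n =
  (if (n == psize a) || (n == (psize a).+1)
   then psgn a / (zee a)%:R
   else 0).
Proof.
have sumE : \sum_(s : 'S_n) sgnp s * binomX a s = signed_binom_sum rat a [set: 'I_n].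
  apply: eq_big => [s | s _]; first by apply/esym/subsetP => x; rewrite inE.
  congr (_ * _%:R); apply: eq_bigr => j _; congr 'C(_, _).
  by apply: eq_card => E; rewrite !inE subsetT.
have zee_neq0 : (zee a)%:R != 0 :> rat by rewrite pnatr_eq0 -lt0n zee_gt0.
have := zee_signed_binom_sum rat a [set: 'I_n].
rewrite cardsT card_ord -sumE /window_fact /smoment /psgn.
case: ifP => _ sumP; last first.
  by move/eqP: sumP; rewrite mulf_eq0 (negbTE zee_neq0) => /eqP ->; rewrite mulr0.
rewrite -[\sum_(s : 'S_n) _](mulKf zee_neq0) sumP.
by field; rewrite zee_neq0 pnatr_eq0 -lt0n fact_gt0.
Qed.
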